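(* Let $\mathcal{L}\subset\mathcal{L}_*$ be lineages with hierarchical generators $\mathcal{H},\mathcal{H}_*$, and assume $\mathcal{H}$ is linearly independent (as a set of functions on $\mathbb{R}^d$). Let $\mathcal{R}=\mathcal{L}_*\setminus\mathcal{L}$. Then for every $\varphi\in\mathcal{R}\cap\mathcal{H}$ there exist $k\ge1$ and $\varphi_*\in(\mathcal{H}_*\setminus\mathcal{H})\cap\mathrm{ch}^k(\varphi)$.
   Context: Fix integers $d\ge1$, $n\ge2$, $m\ge2$; $s=n-1$, $p=m-1$. B-splines $\varphi^\ell_{\vec i}(\vec x)=\prod_kQ(n^\ell x_k-i_k)$ on $\mathbb{R}^d$ for $\ell\ge0$, $\vec i\in\mathbb{Z}^d$, $Q$ the uniform B-spline of order $m$ with knots $0,\dots,m$; $\mathfrak{B}$ the set of all of them; $\mathcal{B}^0=\{\varphi^0_{\vec i}:\vec i\in[-p:0]^d\}$. Children $\mathrm{ch}(\varphi^\ell_{\vec i})=\{\varphi^{\ell+1}_{\vec k}:n\vec i\le\vec k\le n\vec i+sm\}$, extended to sets by union, $\mathrm{ch}^k$ the $k$-fold application. A lineage is a finite $\mathcal{L}\subset\mathfrak{B}$ with $\mathcal{L}\subset\mathcal{B}^0\cup\mathrm{ch}(\mathcal{L})$; its hierarchical generator is $(\mathcal{B}^0\cup\mathrm{ch}(\mathcal{L}))\setminus\mathcal{L}$. *)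

From Stdlib Require Import Reals ZArith List Lia.
Import ListNotations.
Open Scope R_scope.

(* Uniform B-spline of order j with knots 0,1,...,j (Cox--de Boor recursion):
   Q_1 = indicator of [0,1),
   Q_j(x) = (x Q_{j-1}(x) + (j - x) Q_{j-1}(x-1)) / (j-1). *)
Fixpoint Qspline (j : nat) (x : R) : R :=
  match j with
  | O => 0
  | S O => if Rle_dec 0 x then (if Rlt_dec x 1 then 1 else 0) else 0
  | S ((S k) as j') =>
      (x * Qspline j' x + (INR j - x) * Qspline j' (x - 1)) / INR j'
  end.

(* A B-spline phi^l_i is indexed by its level l and its integer shift
   vector i in Z^d, represented as a list of length d. *)
Definition bspl : Type := (nat * list Z)%type.

Definition bset : Type := bspl -> Prop.

(* Points of R^d are given by their coordinates x_0,...,x_{d-1}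
   (components beyond d-1 are ignored). *)
Definition prodR (d : nat) (f : nat -> R) : R :=
  fold_right Rmult 1 (map f (seq 0 d)).

Definition bfun (d n m : nat) (b : bspl) (x : nat -> R) : R :=
  prodR d (fun k => Qspline m (INR (n ^ fst b) * x k - IZR (nth k (snd b) 0%Z))).

Definition wf (d : nat) (b : bspl) : Prop := length (snd b) = d.

Definition B0 (d m : nat) : bset := fun b =>
  wf d b /\ fst b = O /\
  forall k, (k < d)%nat ->
    (- (Z.of_nat m - 1) <= nth k (snd b) 0 <= 0)%Z.

Definition child (d n m : nat) (a b : bspl) : Prop :=
  wf d a /\ wf d b /\ fst b = S (fst a) /\
  forall c, (c < d)%nat ->
    (Z.of_nat n * nth c (snd a) 0 <= nth c (snd b) 0 <=
       Z.of_nat n * nth c (snd a) 0 + (Z.of_nat n - 1) * Z.of_nat m)%Z.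

Definition chS (d n m : nat) (S : bset) : bset := fun b =>
  exists a, S a /\ child d n m a b.

Fixpoint chk (d n m : nat) (k : nat) (S : bset) : bset :=
  match k with
  | O => S
  | S k' => chS d n m (chk d n m k' S)
  end.

Definition single (a : bspl) : bset := fun b => b = a.

Definition finite_set (S : bset) : Prop :=
  exists l : list bspl, forall b, S b <-> In b l.

Definition lineage (d n m : nat) (L : bset) : Prop :=
  finite_set L /\ forall b, L b -> B0 d m b \/ chS d n m L b.

Definition hgen (d n m : nat) (L : bset) : bset := fun b =>
  (B0 d m b \/ chS d n m L b) /\ ~ L b.

Definition lin_indep (d n m : nat) (H : bset) : Prop :=
  forall (l : list bspl) (c : bspl -> R),
    NoDup l -> (forall b, In b l -> H b) ->
    (forall x : nat -> R,
        fold_right Rplus 0 (map (fun b => c b * bfun d n m b x) l) = 0) ->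
    forall b, In b l -> c b = 0.

From Stdlib Require Import Reals ZArith List Lia Lra Classical.
Import ListNotations.
Open Scope R_scope.

(* Every B-spline is a linear combination of its children: with
   Q = ∇^m x_+^(m-1) / (m-1)! and ∇_n = (1 + E + ... + E^(n-1)) ∇ for the
   backward shift E, the function Q(u) is a combination of the translates
   Q(n u - r), 0 <= r <= (n-1) m, and the tensor product carries this to R^d.
   If no descendant of phi belonged to H_* \ H, pushing this refinement of phi
   down through the finite lineage L_* until every term has left L_* would
   write phi as a combination of strictly finer members of H, contradicting
   the linear independence of H. *)

Definition sumL {X} (f : X -> R) (l : list X) : R := fold_right Rplus 0 (map f l).

Lemma sumL_cons {X} (f : X -> R) a l : sumL f (a :: l) = f a + sumL f l.
Proof. reflexivity. Qed.

Lemma sumL_app {X} (f : X -> R) l1 l2 : sumL f (l1 ++ l2) = sumL f l1 + sumL f l2.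
Proof. induction l1; unfold sumL in *; simpl; [ring | rewrite IHl1; ring]. Qed.

Lemma sumL_ext_in {X} (f g : X -> R) l :
  (forall x, In x l -> f x = g x) -> sumL f l = sumL g l.
Proof.
  induction l as [|a l IH]; intro H; [reflexivity|].
  rewrite !sumL_cons, (H a (or_introl eq_refl)), IH; [reflexivity|].
  intros; apply H; right; assumption.
Qed.

Lemma sumL_map {X Y} (f : Y -> R) (h : X -> Y) l :
  sumL f (map h l) = sumL (fun x => f (h x)) l.
Proof. unfold sumL; rewrite map_map; reflexivity. Qed.

Lemma sumL_mul_l {X} (f : X -> R) c l : c * sumL f l = sumL (fun x => c * f x) l.
Proof. induction l; unfold sumL in *; simpl; [ring | rewrite <- IHl; ring]. Qed.

Lemma sumL_mul_r {X} (f : X -> R) c l : sumL f l * c = sumL (fun x => f x * c) l.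
Proof. induction l; unfold sumL in *; simpl; [ring | rewrite <- IHl; ring]. Qed.

Lemma sumL_flat_map {X Y} (f : Y -> R) (g : X -> list Y) l :
  sumL f (flat_map g l) = sumL (fun x => sumL f (g x)) l.
Proof. induction l; simpl; [reflexivity|]. rewrite sumL_app, IHl. reflexivity. Qed.

(** * The univariate refinement equation *)

Definition tpow (k : nat) (y : R) : R := if Rle_dec 0 y then y ^ k else 0.

Fixpoint bdiff (h : R) (k : nat) (g : R -> R) (x : R) : R :=
  match k with
  | O => g x
  | S k' => bdiff h k' g x - bdiff h k' g (x - h)
  end.

Lemma bdiff_ext h k f g x : (forall y, f y = g y) -> bdiff h k f x = bdiff h k g x.
Proof. intro H. revert x; induction k; intro x; simpl; rewrite ?IHk; auto. Qed.

Lemma bdiff_scal h k c g x : bdiff h k (fun y => c * g y) x = c * bdiff h k g x.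
Proof. revert x; induction k; intro x; simpl; [reflexivity | rewrite !IHk; ring]. Qed.

Lemma bdiff_dilate k g h u : bdiff 1 k (fun y => g (h * y)) u = bdiff h k g (h * u).
Proof.
  revert u; induction k; intro u; simpl; [reflexivity|].
  rewrite !IHk. replace (h * (u - 1)) with (h * u - h) by ring. reflexivity.
Qed.

Lemma mulX_bdiff k g x :
  x * bdiff 1 (S k) g x =
  bdiff 1 (S k) (fun y => y * g y) x - INR (S k) * bdiff 1 k g (x - 1).
Proof.
  revert x; induction k; intro x; [simpl; ring|].
  pose proof (IHk x) as Ix. pose proof (IHk (x - 1)) as Ix1.
  change (bdiff 1 (S (S k)) ?f ?y) with (bdiff 1 (S k) f y - bdiff 1 (S k) f (y - 1)).
  change (bdiff 1 (S k) g (x - 1))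
    with (bdiff 1 k g (x - 1) - bdiff 1 k g (x - 1 - 1)) in *.
  rewrite (S_INR (S k)), (S_INR k) in *. nra.
Qed.

Lemma mul_tpow k y : y * tpow k y = tpow (S k) y.
Proof. unfold tpow; destruct (Rle_dec 0 y); simpl; ring. Qed.

Lemma tpow_scale k c y : 0 < c -> tpow k (c * y) = c ^ k * tpow k y.
Proof.
  intro Hc; unfold tpow; destruct (Rle_dec 0 (c * y)), (Rle_dec 0 y).
  - apply Rpow_mult_distr.
  - exfalso; nra.
  - exfalso; nra.
  - ring.
Qed.

Lemma Qspline_bdiff_tpow p x :
  Qspline (S p) x = bdiff 1 (S p) (tpow p) x / INR (fact p).
Proof.
  revert x; induction p; intro x.
  - simpl; unfold tpow.
    destruct (Rle_dec 0 x), (Rle_dec 0 (x - 1)), (Rlt_dec x 1); simpl; lra.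
  - change (Qspline (S (S p)) x) with
      ((x * Qspline (S p) x + (INR (S (S p)) - x) * Qspline (S p) (x - 1)) / INR (S p)).
    rewrite !IHp.
    rewrite (bdiff_ext 1 (S (S p)) (tpow (S p)) (fun y => y * tpow p y))
      by (intro; symmetry; apply mul_tpow).
    change (bdiff 1 (S (S p)) ?f x) with (bdiff 1 (S p) f x - bdiff 1 (S p) f (x - 1)).
    pose proof (mulX_bdiff p (tpow p) x) as Ix.
    pose proof (mulX_bdiff p (tpow p) (x - 1)) as Ix1.
    change (bdiff 1 (S p) (tpow p) (x - 1))
      with (bdiff 1 p (tpow p) (x - 1) - bdiff 1 p (tpow p) (x - 1 - 1)) in *.
    change (fact (S p)) with (S p * fact p)%nat. rewrite mult_INR.
    assert (Hf := INR_fact_neq_0 p).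
    assert (Hp : INR (S p) <> 0) by (apply not_0_INR; lia).
    rewrite (S_INR (S p)).
    apply (Rmult_eq_reg_r (INR (S p) * INR (fact p)));
      [| apply Rmult_integral_contrapositive; tauto].
    field_simplify; [nra | tauto | tauto].
Qed.

(* A list [A] of pairs (a, r) encodes the translation operator
   f |-> sum a f(. - r). *)
Definition tcomb (A : list (R * nat)) (f : R -> R) (y : R) : R :=
  sumL (fun q => fst q * f (y - INR (snd q))) A.

Lemma tcomb_app A B f y : tcomb (A ++ B) f y = tcomb A f y + tcomb B f y.
Proof. apply sumL_app. Qed.

Lemma tcomb_ext A f g y : (forall z, f z = g z) -> tcomb A f y = tcomb A g y.
Proof. intro H; apply sumL_ext_in; intros; rewrite H; reflexivity. Qed.

Lemma tcomb_scal A c f y : tcomb A (fun z => c * f z) y = c * tcomb A f y.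
Proof. unfold tcomb; rewrite sumL_mul_l; apply sumL_ext_in; intros; ring. Qed.

Lemma tcomb_diff A F y :
  tcomb A (fun z => F z - F (z - 1)) y = tcomb A F y - tcomb A F (y - 1).
Proof.
  induction A as [|[a r] A IH]; [unfold tcomb, sumL; simpl; ring|].
  unfold tcomb in *; rewrite !sumL_cons, IH; cbn [fst snd].
  replace (y - INR r - 1) with (y - 1 - INR r) by ring. ring.
Qed.

Definition tshift (t : nat) (A : list (R * nat)) : list (R * nat) :=
  map (fun q => (fst q, (snd q + t)%nat)) A.

Lemma tcomb_tshift t A f y : tcomb (tshift t A) f y = tcomb A f (y - INR t).
Proof.
  unfold tcomb, tshift; rewrite sumL_map; apply sumL_ext_in; intros [a r] _; simpl.
  rewrite plus_INR. replace (y - (INR r + INR t)) with (y - INR t - INR r) by ring.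
  reflexivity.
Qed.

(* [box N A] is [A] composed with 1 + E + ... + E^(N-1). *)
Fixpoint box (N : nat) (A : list (R * nat)) : list (R * nat) :=
  match N with O => [] | S N' => box N' A ++ tshift N' A end.

Lemma tcomb_box_diff N A F y :
  tcomb (box N A) (fun z => F z - F (z - 1)) y = tcomb A F y - tcomb A F (y - INR N).
Proof.
  induction N; simpl box.
  - unfold tcomb, sumL; simpl. replace (y - 0) with y by ring. ring.
  - rewrite tcomb_app, IHN, tcomb_tshift, tcomb_diff, S_INR.
    replace (y - INR N - 1) with (y - (INR N + 1)) by ring. ring.
Qed.

Lemma box_bound N A B : (forall q, In q A -> (snd q <= B)%nat) ->
  forall q, In q (box N A) -> (snd q <= B + (N - 1))%nat.
Proof.
  intro H; induction N; simpl; intros q Hq; [contradiction|].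
  apply in_app_or in Hq as [Hq|Hq]; [apply IHN in Hq; lia|].
  apply in_map_iff in Hq as [q' [<- Hq']]; simpl. apply H in Hq'. lia.
Qed.

Fixpoint box_pow (n k : nat) : list (R * nat) :=
  match k with O => [(1, 0%nat)] | S k' => box n (box_pow n k') end.

Lemma box_pow_bound n k q : In q (box_pow n k) -> (snd q <= (n - 1) * k)%nat.
Proof.
  revert q; induction k; simpl; intros q Hq.
  - destruct Hq as [<-|[]]; simpl; lia.
  - apply (box_bound n _ _ IHk) in Hq. rewrite Nat.mul_succ_r. lia.
Qed.

Lemma bdiff_box_pow n k g y :
  bdiff (INR n) k g y = tcomb (box_pow n k) (bdiff 1 k g) y.
Proof.
  revert y; induction k; intro y.
  - unfold tcomb, sumL; simpl. replace (y - 0) with y by ring. ring.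
  - simpl bdiff. rewrite !IHk, <- tcomb_box_diff. reflexivity.
Qed.

Lemma Qspline_refinement n p : (1 <= n)%nat -> exists A : list (R * nat),
  (forall q, In q A -> (snd q <= (n - 1) * S p)%nat) /\
  forall u, Qspline (S p) u = tcomb A (Qspline (S p)) (INR n * u).
Proof.
  intro Hn. assert (Hn0 : 0 < INR n) by (apply lt_0_INR; lia).
  assert (Hnp : INR n ^ p <> 0) by (apply pow_nonzero; lra).
  assert (Hf := INR_fact_neq_0 p).
  exists (map (fun q => (fst q / INR n ^ p, snd q)) (box_pow n (S p))). split.
  - intros q Hq. apply in_map_iff in Hq as [q' [<- Hq']]. exact (box_pow_bound _ _ _ Hq').
  - intro u.
    assert (Hdil : bdiff 1 (S p) (fun y => tpow p (INR n * y)) u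
                   = INR n ^ p * bdiff 1 (S p) (tpow p) u).
    { rewrite <- bdiff_scal. apply bdiff_ext. intro; apply tpow_scale; exact Hn0. }
    rewrite bdiff_dilate, bdiff_box_pow,
      (tcomb_ext _ _ (fun z => INR (fact p) * Qspline (S p) z)), tcomb_scal in Hdil
      by (intro; rewrite Qspline_bdiff_tpow; field; exact Hf).
    rewrite Qspline_bdiff_tpow.
    replace (bdiff 1 (S p) (tpow p) u)
      with (INR (fact p) * tcomb (box_pow n (S p)) (Qspline (S p)) (INR n * u) / INR n ^ p)
      by (rewrite Hdil; field; exact Hnp).
    unfold tcomb. rewrite sumL_map, sumL_mul_l. unfold Rdiv. rewrite !sumL_mul_r.
    apply sumL_ext_in; intros; simpl. field. auto.
Qed.

(** * Refinement of tensor-product B-splines *)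

Definition fupd (s : nat -> nat) (k r : nat) : nat -> nat :=
  fun j => if Nat.eq_dec j k then r else s j.

(* The terms of the expansion of prod_(k in ks) sum_(q in A) fst q * F k (snd q):
   one term per choice function [s : nat -> nat] of a summand for each [k]. *)
Fixpoint prod_terms (A : list (R * nat)) (ks : list nat) : list (R * (nat -> nat)) :=
  match ks with
  | [] => [(1, fun _ => 0%nat)]
  | k :: ks' =>
      flat_map (fun a => map (fun t => (fst a * fst t, fupd (snd t) k (snd a)))
                             (prod_terms A ks')) A
  end.

Lemma prod_sumL_expand A (F : nat -> nat -> R) ks : NoDup ks ->
  fold_right Rmult 1 (map (fun k => sumL (fun a => fst a * F k (snd a)) A) ks) =
  sumL (fun t => fst t * fold_right Rmult 1 (map (fun k => F k (snd t k)) ks))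
       (prod_terms A ks).
Proof.
  induction ks as [|k ks IH]; intro Hnd; [unfold sumL; simpl; ring|].
  apply NoDup_cons_iff in Hnd as [Hk Hnd].
  cbn [map fold_right prod_terms]. rewrite IH by exact Hnd.
  rewrite sumL_flat_map, sumL_mul_r. apply sumL_ext_in; intros [a r] _.
  rewrite sumL_map, sumL_mul_l. apply sumL_ext_in; intros [c s] _. cbn [fst snd map].
  unfold fupd at 1. destruct (Nat.eq_dec k k) as [_|]; [|congruence].
  rewrite (map_ext_in (fun j => F j (fupd s k r j)) (fun j => F j (s j))); [ring|].
  intros j Hj. unfold fupd. destruct (Nat.eq_dec j k); [subst; contradiction | reflexivity].
Qed.

Lemma prod_terms_bound A ks B : (forall a, In a A -> (snd a <= B)%nat) ->
  forall t, In t (prod_terms A ks) -> forall j, (snd t j <= B)%nat.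
Proof.
  intro H; induction ks as [|k ks IH]; simpl; intros t Ht j.
  - destruct Ht as [<-|[]]; simpl; lia.
  - apply in_flat_map in Ht as [a [Ha Ht]]. apply in_map_iff in Ht as [t' [<- Ht']].
    simpl. unfold fupd. destruct (Nat.eq_dec j k); auto.
Qed.

Lemma nth_map_seq (f : nat -> Z) c d : (c < d)%nat -> nth c (map f (seq 0 d)) 0%Z = f c.
Proof.
  intro H. rewrite (nth_indep _ _ (f 0%nat)) by (rewrite length_map, length_seq; lia).
  rewrite map_nth, seq_nth by lia. reflexivity.
Qed.

Section Span.

Variables d n m : nat.

Definition lin_comb (P : list (R * bspl)) (x : nat -> R) : R :=
  sumL (fun q => fst q * bfun d n m (snd q) x) P.

Definition in_span (S : bset) (b : bspl) : Prop :=
  exists P : list (R * bspl),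
    (forall q, In q P -> S (snd q)) /\ forall x, bfun d n m b x = lin_comb P x.

Lemma in_span_of_mem (S : bset) b : S b -> in_span S b.
Proof.
  intro Hb. exists [(1, b)]. split.
  - intros q [<-|[]]. exact Hb.
  - intro x. unfold lin_comb, sumL; simpl. ring.
Qed.

Lemma lin_comb_in_span (S : bset) P :
  (forall q, In q P -> in_span S (snd q)) ->
  exists P', (forall q, In q P' -> S (snd q)) /\ forall x, lin_comb P x = lin_comb P' x.
Proof.
  induction P as [|[a b] P IH]; intro H.
  - exists []. split; [intros _ [] | reflexivity].
  - destruct (H (a, b) (or_introl eq_refl)) as [Pb [HPb Hb]].
    destruct IH as [P' [HP' HPP']]; [intros; apply H; right; assumption|].
    exists (map (fun q => (a * fst q, snd q)) Pb ++ P'). split.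
    + intros q Hq. apply in_app_or in Hq as [Hq|Hq]; [|auto].
      apply in_map_iff in Hq as [q' [<- Hq']]. exact (HPb q' Hq').
    + intro x. unfold lin_comb in *.
      rewrite sumL_cons, sumL_app, sumL_map, <- HPP'. cbn [fst snd].
      rewrite Hb, sumL_mul_l. f_equal. apply sumL_ext_in; intros; cbn [fst snd]. ring.
Qed.

End Span.

Lemma bspline_refinable d n m b : (1 <= n)%nat -> (1 <= m)%nat -> wf d b ->
  in_span d n m (child d n m b) b.
Proof.
  intros Hn Hm Hwf. destruct m as [|p]; [lia|].
  destruct (Qspline_refinement n p Hn) as [A [HA HQ]]. destruct b as [l v].
  set (shift := fun s : nat -> nat =>
    map (fun k => (Z.of_nat n * nth k v 0 + Z.of_nat (s k))%Z) (seq 0 d)).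
  exists (map (fun t => (fst t, (S l, shift (snd t)))) (prod_terms A (seq 0 d))). split.
  - intros q Hq. apply in_map_iff in Hq as [t [<- Ht]].
    split; [exact Hwf|]. split; [unfold wf, shift; simpl; rewrite length_map, length_seq; reflexivity|].
    split; [reflexivity|]. intros c Hc. unfold shift; simpl. rewrite nth_map_seq by exact Hc.
    pose proof (prod_terms_bound A (seq 0 d) _ HA t Ht c) as Hb.
    apply inj_le in Hb. rewrite Nat2Z.inj_mul, Nat2Z.inj_sub in Hb by lia. simpl (Z.of_nat 1) in Hb.
    nia.
  - intro x. unfold lin_comb, bfun, prodR; cbn [fst snd].
    set (F := fun k r => Qspline (S p) (INR n * (INR (n ^ l) * x k - IZR (nth k v 0%Z)) - INR r)).
    rewrite (map_ext _ (fun k => sumL (fun a => fst a * F k (snd a)) A)) by (intro; apply HQ).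
    rewrite (prod_sumL_expand A F) by apply seq_NoDup.
    rewrite sumL_map. apply sumL_ext_in; intros [c s] _. cbn [fst snd]. do 2 f_equal.
    apply map_ext_in; intros k Hk. apply in_seq in Hk. unfold F, shift.
    rewrite nth_map_seq by lia. f_equal.
    rewrite plus_IZR, mult_IZR, <- !INR_IZR_INZ.
    change (n ^ S l)%nat with (n * n ^ l)%nat. rewrite mult_INR. ring.
Qed.

(** * Descent through a lineage *)

Lemma chk_level d n m k a b : chk d n m k (single a) b -> fst b = (fst a + k)%nat.
Proof.
  revert b; induction k; simpl; intros b H.
  - unfold single in H; subst; lia.
  - destruct H as [c [Hc [_ [_ [Hl _]]]]]. apply IHk in Hc. lia.
Qed.

Lemma lineage_wf d n m L b : lineage d n m L -> L b -> wf d b.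
Proof. intros [_ HL] Hb. destruct (HL b Hb) as [[Hw _] | [a [_ [_ [Hw _]]]]]; exact Hw. Qed.

Lemma finite_set_level_bound (S : bset) :
  finite_set S -> exists M, forall b, S b -> (fst b <= M)%nat.
Proof.
  intros [l Hl]. exists (fold_right Nat.max 0%nat (map fst l)). intros b Hb.
  apply Hl in Hb. clear Hl. induction l as [|a l IH]; simpl in *; [contradiction|].
  destruct Hb as [<-|Hb]; [lia | apply IH in Hb; lia].
Qed.

(* Children still in [Ls] are refined again; this terminates because the
   levels in [Ls] are bounded by [M]. *)
Lemma descendant_in_span_of_frontier d n m (Ls T : bset) (M : nat) (a : bspl) :
  (forall b, wf d b -> in_span d n m (child d n m b) b) ->
  (forall b, Ls b -> wf d b /\ (fst b <= M)%nat) ->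
  (forall k b c, chk d n m k (single a) b -> Ls b -> child d n m b c -> ~ Ls c -> T c) ->
  forall k b, chk d n m k (single a) b -> Ls b -> in_span d n m T b.
Proof.
  intros Hrefine Hbound Hfront.
  enough (H : forall j k b, (M - fst b <= j)%nat ->
                chk d n m k (single a) b -> Ls b -> in_span d n m T b)
    by (intros k b; apply (H (M - fst b)%nat); lia).
  induction j as [|j IH]; intros k b Hj Hk Hb.
  all: destruct (Hrefine b (proj1 (Hbound b Hb))) as [P [HP HbP]].
  all: destruct (lin_comb_in_span d n m T P) as [P' [HP' HPP']];
       [| exists P'; split; [exact HP' | intro x; rewrite HbP; apply HPP']].
  all: intros [r c] Hq; specialize (HP _ Hq); cbn [snd] in HP |- *.
  all: destruct (classic (Ls c)) as [Hc|Hc];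
       [| apply in_span_of_mem; exact (Hfront k b c Hk Hb HP Hc)].
  all: pose proof (proj2 (Hbound c Hc)); pose proof HP as [_ [_ [Hl _]]].
  - lia.
  - apply (IH (S k)); [lia | exists b; split; assumption | exact Hc].
Qed.

(** * Linear independence *)

Definition bspl_eq_dec (a b : bspl) : {a = b} + {a <> b}.
Proof. decide equality; [apply (list_eq_dec Z.eq_dec) | apply Nat.eq_dec]. Defined.

Lemma sumL_bump (F c : bspl -> R) a b0 l : NoDup l -> In b0 l ->
  sumL (fun b => (if bspl_eq_dec b b0 then c b + a else c b) * F b) l =
  sumL (fun b => c b * F b) l + a * F b0.
Proof.
  induction l as [|x l IH]; intros Hnd Hin; [destruct Hin|].
  apply NoDup_cons_iff in Hnd as [Hx Hnd].
  rewrite !sumL_cons. destruct (bspl_eq_dec x b0) as [<-|Hne].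
  - rewrite (sumL_ext_in _ (fun b => c b * F b)); [ring|].
    intros y Hy. destruct (bspl_eq_dec y x); [subst; contradiction | reflexivity].
  - destruct Hin as [Hin|Hin]; [congruence|]. rewrite IH by assumption. ring.
Qed.

Lemma sumL_collect (P : list (R * bspl)) : exists l (c : bspl -> R), NoDup l /\
  (forall b, In b l -> In b (map snd P)) /\
  forall F : bspl -> R, sumL (fun b => c b * F b) l = sumL (fun q => fst q * F (snd q)) P.
Proof.
  induction P as [|[a b0] P IH].
  - exists [], (fun _ => 0). split; [constructor|]. split; [intros _ [] | reflexivity].
  - destruct IH as [l [c [Hnd [Hin HF]]]].
    destruct (in_dec bspl_eq_dec b0 l) as [Hb|Hb].
    + exists l, (fun b => if bspl_eq_dec b b0 then c b + a else c b).
      split; [exact Hnd|]. split; [intros; right; auto|].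
      intro F. rewrite sumL_bump, HF, sumL_cons by assumption. simpl. ring.
    + exists (b0 :: l), (fun b => if bspl_eq_dec b b0 then a else c b).
      split; [constructor; assumption|]. split; [intros b [<-|Hb']; simpl; auto|].
      intro F. rewrite !sumL_cons, <- HF. cbn [fst snd].
      destruct (bspl_eq_dec b0 b0) as [_|]; [|congruence]. f_equal.
      apply sumL_ext_in; intros y Hy.
      destruct (bspl_eq_dec y b0); [subst; contradiction | reflexivity].
Qed.

Lemma lin_indep_not_in_span d n m (H S : bset) phi :
  lin_indep d n m H -> H phi -> (forall b, S b -> H b /\ b <> phi) ->
  ~ in_span d n m S phi.
Proof.
  intros Hind Hphi HS [P [HP HphiP]].
  destruct (sumL_collect P) as [l [c [Hnd [Hin HF]]]].
  assert (Hl : forall b, In b l -> S b).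
  { intros b Hb. apply Hin, in_map_iff in Hb as [q [<- Hq]]. exact (HP q Hq). }
  assert (Hphil : ~ In phi l) by (intro Hp; exact (proj2 (HS _ (Hl _ Hp)) eq_refl)).
  set (c' := fun b => if bspl_eq_dec b phi then -1 else c b).
  enough (Hc' : c' phi = 0)
    by (unfold c' in Hc'; destruct (bspl_eq_dec phi phi); [lra | congruence]).
  apply (Hind (phi :: l) c'); [constructor; assumption | | | left; reflexivity].
  - intros b [<-|Hb]; [exact Hphi | exact (proj1 (HS b (Hl b Hb)))].
  - intro x. fold (sumL (fun b => c' b * bfun d n m b x) (phi :: l)).
    rewrite sumL_cons, (sumL_ext_in _ (fun b => c b * bfun d n m b x)).
    + rewrite (HF (fun b => bfun d n m b x)). fold (lin_comb d n m P x).
      rewrite <- HphiP. unfold c'. destruct (bspl_eq_dec phi phi); [ring | congruence].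
    + intros y Hy. unfold c'. destruct (bspl_eq_dec y phi); [subst; contradiction | reflexivity].
Qed.

Close Scope R_scope.

Theorem lemma6p4 (d n m : nat) (hd : (1 <= d)%nat) (hn : (2 <= n)%nat)
    (hm : (2 <= m)%nat) (L Ls : bset) :
  lineage d n m L -> lineage d n m Ls ->
  (forall b, L b -> Ls b) ->
  lin_indep d n m (hgen d n m L) ->
  forall phi : bspl, Ls phi -> ~ L phi -> hgen d n m L phi ->
  exists k : nat, (1 <= k)%nat /\
    exists phis : bspl,
      (hgen d n m Ls phis /\ ~ hgen d n m L phis) /\
      chk d n m k (single phi) phis.
Proof.
  intros _ HLs _ Hind phi Hphi _ Hphih.
  apply NNPP; intro Hnone.
  assert (Hfront : forall k b c, chk d n m k (single phi) b -> Ls b ->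
                     child d n m b c -> ~ Ls c -> hgen d n m L c /\ fst phi < fst c).
  { intros k b c Hk Hb Hc HcLs.
    assert (Hk' : chk d n m (S k) (single phi) c) by (exists b; split; assumption).
    split; [| rewrite (chk_level _ _ _ _ _ _ Hk'); lia].
    apply NNPP; intro HcL. apply Hnone. exists (S k). split; [lia|].
    exists c. split; [| exact Hk'].
    split; [| exact HcL]. split; [right; exists b; split; assumption | exact HcLs]. }
  destruct (finite_set_level_bound Ls (proj1 HLs)) as [M HM].
  assert (Hbound : forall b, Ls b -> wf d b /\ fst b <= M)
    by (intros b Hb; split; [exact (lineage_wf d n m Ls b HLs Hb) | exact (HM b Hb)]).
  assert (Hrefine : forall b, wf d b -> in_span d n m (child d n m b) b)
    by (intros b; apply bspline_refinable; lia).
  apply (lin_indep_not_in_span d n m _ (fun c => hgen d n m L c /\ fst phi < fst c)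
           phi Hind Hphih).
  - intros b [Hb Hlt]. split; [exact Hb | intros ->; lia].
  - exact (descendant_in_span_of_frontier d n m Ls _ M phi Hrefine Hbound Hfront
             0 phi eq_refl Hphi).
Qed.
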